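(* Let $W,V$ be subspaces of $\mathbb{C}^n$ with $\mathbb{C}^n=W\oplus V^\perp$, let $\{\mathbf{w}_i\}_{i=1}^N$ be a frame for $W$ with frame operator $\mathbf{S}=\sum_{i=1}^N\mathbf{w}_i\mathbf{w}_i^*$, and let $\{\mathbf{v}_i\}_{i=1}^N$ be an oblique dual frame of $\{\mathbf{w}_i\}_{i=1}^N$ on $V$. Let $p=2k$ where $k\ge1$, and let $d_W=\dim W$. Then $$\sum_{i=1}^N|\langle\mathbf{w}_i,\mathbf{v}_i\rangle|^p\ge N^{1-p}d_W^p\quad\text{and}\quad\sum_{i=1}^N\sum_{j=1}^N|\langle\mathbf{w}_i,\mathbf{v}_j\rangle|^p\ge N^{2-p}d_W^{p/2}.$$ Furthermore, when $k>1$, the first inequality is an equality if and only if $\langle\mathbf{w}_i,\mathbf{v}_i\rangle=\frac{d_W}{N}$ for all $i$, and the second inequality is an equality if and only if $|\langle\mathbf{w}_i,\mathbf{v}_j\rangle|$ is constant over all $i$ and $j$ and $\mathbf{v}_j=\boldsymbol{\pi}_{VW^\perp}\mathbf{S}^\dagger\mathbf{w}_j$ for each $j$.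
   Context: The inner product on $\mathbb{C}^n$ is $\langle\mathbf{x},\mathbf{y}\rangle=\mathbf{y}^*\mathbf{x}$. $\mathbf{S}^\dagger$ is the Moore–Penrose inverse. When $\mathbb{C}^n=W\oplus V^\perp$ (equivalently $\mathbb{C}^n=V\oplus W^\perp$), $\boldsymbol{\pi}_{WV^\perp}$ is the oblique projection onto $W$ along $V^\perp$ and $\boldsymbol{\pi}_{VW^\perp}$ the oblique projection onto $V$ along $W^\perp$. A finite family in $W$ is a frame for $W$ if it spans $W$. A frame $\{\mathbf{v}_i\}_{i=1}^N\subset V$ for $V$ is an oblique dual frame of $\{\mathbf{w}_i\}$ on $V$ if $\boldsymbol{\pi}_{WV^\perp}\mathbf{f}=\sum_{i=1}^N\langle\mathbf{f},\mathbf{v}_i\rangle\mathbf{w}_i$ for all $\mathbf{f}\in\mathbb{C}^n$. *)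

From HB Require Import structures.
From mathcomp Require Import all_boot all_order all_algebra.
Set Implicit Arguments. Unset Strict Implicit. Unset Printing Implicit Defensive.
Import Order.TTheory GRing.Theory Num.Theory.
Local Open Scope ring_scope.

(* Vectors of C^n are row vectors 'rV[C]_n; subspaces of C^n are row spaces
   of matrices (mxalgebra convention). *)

Section Defs.
Variable C : numClosedFieldType.

Definition ip n (x y : 'rV[C]_n) : C := \sum_(k < n) x 0 k * (y 0 k)^*.

Definition adjmx m n (A : 'M[C]_(m, n)) : 'M[C]_(n, m) := (map_mx Num.conj A)^T.

(* orthogonal complement of the row space of V: all u with <u, v> = 0
   for every row v of V, i.e. u *m V^* = 0 *)
Definition orthmx n (V : 'M[C]_n) : 'M[C]_n := kermx (adjmx V).

Definition is_MP_inverse n (S X : 'M[C]_n) : Prop :=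
  [/\ S *m X *m S = S, X *m S *m X = X,
      adjmx (S *m X) = S *m X & adjmx (X *m S) = X *m S].

(* the frame operator S f = \sum_i <f, w_i> w_i, in row-vector convention
   (f |-> f *m frame_op w) *)
Definition frame_op n N (w : 'I_N -> 'rV[C]_n) : 'M[C]_n :=
  \sum_(i < N) adjmx (w i) *m w i.

Definition is_frame n N (W : 'M[C]_n) (w : 'I_N -> 'rV[C]_n) : Prop :=
  (\matrix_(i < N) w i == W)%MS.

Definition oblique_proj n (W V : 'M[C]_n) : 'M[C]_n := proj_mx W (orthmx V).

Definition is_oblique_dual n N (W V : 'M[C]_n) (w v : 'I_N -> 'rV[C]_n) : Prop :=
  is_frame V v /\
  forall f : 'rV[C]_n, f *m oblique_proj W V = \sum_(i < N) ip f (v i) *: w i.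

End Defs.

From HB Require Import structures.
From mathcomp Require Import all_boot all_order all_algebra.
From mathcomp Require Import zify ring.
From mathcomp Require Import sesquilinear spectral.
Import Order.TTheory GRing.Theory Num.Theory.
Set Implicit Arguments. Unset Strict Implicit. Unset Printing Implicit Defensive.
Local Open Scope ring_scope.

(* Let Phi and Psi be the matrices with rows w_i and v_i.  The dual-frame
   identity says that the oblique projection onto W along V^perp is Psi^* Phi,
   so the cross Gram matrix G = Phi Psi^*, G_ij = <w_i, v_j>, has trace
   \rank W.  If X is a Moore-Penrose inverse of S = Phi^* Phi, then
   H = Phi X Phi^* is an orthogonal projection with G H = H and H G = G, hence
   G G^* = H + (G - H)(G - H)^*: the Frobenius norm of G is at least
   tr H = \rank W, with equality iff G = H, iff G is Hermitian, iff v_j is the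
   canonical oblique dual w_j X pi_(V, W^perp).  Both bounds then come from the
   power mean inequality (\sum_i x_i)^p <= N^(p-1) \sum_i x_i^p for x_i >= 0,
   applied to |G_ii| (whose sum dominates |tr G|) and to |G_ij|^2; for p > 1
   its equality case forces all x_i to be equal. *)

Lemma chebyshev_term_ge0 (R : numDomainType) (x y : R) m :
  0 <= x -> 0 <= y -> 0 <= (x ^+ m - y ^+ m) * (x - y).
Proof.
move=> x0 y0; have [xy|yx] := real_leP (ger0_real x0) (ger0_real y0).
  by rewrite mulr_le0 // subr_le0 // lerXn2r.
by rewrite mulr_ge0 // subr_ge0 ?lerXn2r // ltW.
Qed.

Section PowerMean.
Variables (R : numDomainType) (I : finType) (x : I -> R).
Hypothesis x_ge0 : forall i, 0 <= x i.

Lemma chebyshev_sum_id m :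
  \sum_i \sum_j (x i ^+ m.+1 - x j ^+ m.+1) * (x i - x j) =
  2%:R * (#|I|%:R * \sum_i x i ^+ m.+2 - (\sum_i x i ^+ m.+1) * \sum_i x i).
Proof.
set Sx := \sum_i x i; set Sm := \sum_i x i ^+ m.+1; set S1 := \sum_i x i ^+ m.+2.
have row_sum i : \sum_j (x i ^+ m.+1 - x j ^+ m.+1) * (x i - x j) =
    #|I|%:R * x i ^+ m.+2 - x i ^+ m.+1 * Sx - x i * Sm + S1.
  rewrite (eq_bigr (fun j => x i ^+ m.+2 - x i ^+ m.+1 * x j - x i * x j ^+ m.+1
                             + x j ^+ m.+2)); last by move=> j _; rewrite !exprS; ring.
  rewrite big_split /= !sumrB sumr_const -mulr_natl -!mulr_sumr -mulr_natl.
  by rewrite -/Sx -/Sm -/S1; ring.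
rewrite (eq_bigr _ (fun i _ => row_sum i)) big_split /= !sumrB sumr_const.
by rewrite -mulr_natl -!mulr_sumr -!mulr_suml -/Sx -/Sm -/S1; ring.
Qed.

Lemma chebyshev_sum_le m :
  (\sum_i x i ^+ m.+1) * (\sum_i x i) <= #|I|%:R * \sum_i x i ^+ m.+2.
Proof.
rewrite -subr_ge0 -(pmulr_rge0 _ (ltr0n R 2)) -chebyshev_sum_id.
by do 2!apply: sumr_ge0 => ? _; apply: chebyshev_term_ge0.
Qed.

Lemma chebyshev_sum_eq m :
  (\sum_i x i ^+ m.+1) * (\sum_i x i) = #|I|%:R * \sum_i x i ^+ m.+2 ->
  forall i j, x i = x j.
Proof.
move=> E i j; have term_ge0 i' j' := chebyshev_term_ge0 m.+1 (x_ge0 i') (x_ge0 j').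
have : \sum_i \sum_j (x i ^+ m.+1 - x j ^+ m.+1) * (x i - x j) = 0.
  by rewrite chebyshev_sum_id E subrr mulr0.
move=> /(psumr_eq0P (fun i _ => sumr_ge0 _ (fun j _ => term_ge0 i j)))/(_ i isT).
move=> /(psumr_eq0P (fun j _ => term_ge0 i j))/(_ j isT)/eqP.
by rewrite mulf_eq0 !subr_eq0 eqrXn2 // orbb => /eqP.
Qed.

Lemma power_mean_le m : (\sum_i x i) ^+ m.+1 <= #|I|%:R ^+ m * \sum_i x i ^+ m.+1.
Proof.
elim: m => [|m IH]; first by rewrite mul1r; under [leRHS]eq_bigr do rewrite expr1.
rewrite exprSr (le_trans (ler_wpM2r (sumr_ge0 _ (fun i _ => x_ge0 i)) IH)) //.
by rewrite -mulrA exprSr -mulrA ler_wpM2l ?exprn_ge0 ?ler0n ?chebyshev_sum_le.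
Qed.

Lemma power_mean_eq m :
  (\sum_i x i) ^+ m.+2 = #|I|%:R ^+ m.+1 * \sum_i x i ^+ m.+2 ->
  forall i j, x i = x j.
Proof.
move=> E i; apply: (chebyshev_sum_eq (m := m)); apply/eqP; rewrite eq_le chebyshev_sum_le /=.
have I_gt0 : (0 < #|I|%:R ^+ m :> R) by rewrite exprn_gt0 // ltr0n; apply/card_gt0P; exists i.
rewrite -(ler_pM2l I_gt0) mulrA -exprSr -E exprSr [leRHS]mulrA.
by rewrite ler_wpM2r ?sumr_ge0 ?power_mean_le.
Qed.

End PowerMean.

Section MeanBounds.
Variables (R : numFieldType) (I : finType) (y : I -> R) (d : R).
Hypotheses (y_ge0 : forall i, 0 <= y i) (d_ge0 : 0 <= d) (d_le_sum : d <= \sum_i y i).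

Let sum_void (F : I -> R) : #|I| = 0%N -> \sum_i F i = 0.
Proof. by move=> I0; apply: big1 => i; case: (fintype0 i I0). Qed.

Let d_void : #|I| = 0%N -> d = 0.
Proof. by move=> I0; apply/le_anti; rewrite d_ge0 -(sum_void y I0) d_le_sum. Qed.

Lemma sum_exprS_ge m : #|I|%:R ^- m * d ^+ m.+1 <= \sum_i y i ^+ m.+1.
Proof.
have [I0|I_gt0] := posnP #|I|; first by rewrite d_void // expr0n mulr0 sum_void.
rewrite ler_pdivrMl ?exprn_gt0 ?ltr0n // (le_trans _ (power_mean_le y_ge0 m)) //.
by rewrite lerXn2r // nnegrE sumr_ge0.
Qed.

Lemma sum_exprS_eq m :
  \sum_i y i ^+ m.+2 = #|I|%:R ^- m.+1 * d ^+ m.+2 <->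
  (exists c, forall i, y i = c) /\ \sum_i y i = d.
Proof.
have [I0|/card_gt0P[i0 _]] := posnP #|I|.
  rewrite !sum_void // d_void // expr0n mulr0; split=> // _.
  by split=> //; exists 0 => i; case: (fintype0 i I0).
have I_gt0 : 0 < #|I|%:R ^+ m.+1 :> R.
  by rewrite exprn_gt0 // ltr0n; apply/card_gt0P; exists i0.
have sum_ge0 : 0 <= \sum_i y i by apply: sumr_ge0.
split=> [E | [[c yc] <-]].
  have d_le : d ^+ m.+2 <= (\sum_i y i) ^+ m.+2 by rewrite lerXn2r.
  have mean_eq : (\sum_i y i) ^+ m.+2 = #|I|%:R ^+ m.+1 * \sum_i y i ^+ m.+2.
    apply/eqP; rewrite eq_le power_mean_le // E mulrA mulfV ?gt_eqF // mul1r.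
    by rewrite (le_trans d_le) ?power_mean_le.
  split; first by exists (y i0) => i; apply: power_mean_eq mean_eq i i0.
  apply/eqP; rewrite -(eqrXn2 (n := m.+2)) // eq_le d_le mean_eq E andbT.
  by rewrite mulrA mulfV ?gt_eqF // mul1r.
rewrite (eq_bigr (fun=> c ^+ m.+2)) => [|i _]; last by rewrite yc.
rewrite sumr_const (eq_bigr (fun=> c)) => [|i _]; last by rewrite yc.
rewrite sumr_const -[c ^+ _ *+ _]mulr_natl -[c *+ _]mulr_natl.
have mean_cancel (K x : R) : K != 0 -> K ^- m.+1 * (K * x) ^+ m.+2 = K * x ^+ m.+2.
  by move=> K0; rewrite exprMn [LHS]mulrA (exprSr K m.+1) mulKf ?expf_neq0.
by rewrite mean_cancel // pnatr_eq0 -lt0n; apply/card_gt0P; exists i0.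
Qed.

End MeanBounds.

Section NormSums.
Variable C : numClosedFieldType.

Lemma normC_sum_eq_mean (I : finType) (z : I -> C) r :
  \sum_i z i = r -> 0 <= r ->
  (exists c, forall i, `|z i| = c) /\ \sum_i `|z i| = r <-> forall i, z i = r / #|I|%:R.
Proof.
move=> <- r_ge0; split=> [[[c zc] norm_sum] i | z_mean].
  have I0 : #|I|%:R != 0 :> C by rewrite pnatr_eq0 -lt0n; apply/card_gt0P; exists i.
  have c_mean : c = (\sum_i z i) / #|I|%:R.
    by rewrite -norm_sum (eq_bigr _ (fun j _ => zc j)) sumr_const -[c *+ _]mulr_natr mulfK.
  rewrite -c_mean; apply: (normC_sum_upper (P := xpredT) (G := fun=> c)) => // [j _|].
    by rewrite zc.
  by rewrite -norm_sum; apply: eq_bigr => j _; rewrite zc.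
have z_ge0 i : 0 <= z i by rewrite z_mean divr_ge0 ?ler0n.
split; last by apply: eq_bigr => i _; rewrite ger0_norm.
by exists ((\sum_i z i) / #|I|%:R) => i; rewrite ger0_norm // z_mean.
Qed.

Lemma normC_sum_exprS_ge (I : finType) (z : I -> C) r m :
  \sum_i z i = r -> 0 <= r -> #|I|%:R ^- m * r ^+ m.+1 <= \sum_i `|z i| ^+ m.+1.
Proof.
move=> z_sum r_ge0; apply: sum_exprS_ge => //.
by rewrite -(ger0_norm r_ge0) -z_sum ler_norm_sum.
Qed.

Lemma normC_sum_exprS_eq (I : finType) (z : I -> C) r m :
  \sum_i z i = r -> 0 <= r ->
  \sum_i `|z i| ^+ m.+2 = #|I|%:R ^- m.+1 * r ^+ m.+2 <-> forall i, z i = r / #|I|%:R.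
Proof.
move=> z_sum r_ge0; rewrite -normC_sum_eq_mean //; apply: sum_exprS_eq => //.
by rewrite -(ger0_norm r_ge0) -z_sum ler_norm_sum.
Qed.

Lemma double_sum_normC_exprS_ge (I J : finType) (a : I -> J -> C) d m :
  0 <= d -> d <= \sum_i \sum_j `|a i j| ^+ 2 ->
  (#|I| * #|J|)%:R ^- m * d ^+ m.+1 <= \sum_i \sum_j `|a i j| ^+ (2 * m.+1).
Proof.
rewrite !pair_bigA -card_prod => d_ge0 d_le.
under eq_bigr do rewrite exprM.
have y_ge0 (p : I * J) : 0 <= `|a p.1 p.2| ^+ 2 by rewrite exprn_ge0.
exact: sum_exprS_ge y_ge0 d_ge0 d_le m.
Qed.

Lemma double_sum_normC_exprS_eq (I J : finType) (a : I -> J -> C) d m :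
  0 <= d -> d <= \sum_i \sum_j `|a i j| ^+ 2 ->
  \sum_i \sum_j `|a i j| ^+ (2 * m.+2) = (#|I| * #|J|)%:R ^- m.+1 * d ^+ m.+2 <->
  (exists c, forall i j, `|a i j| = c) /\ \sum_i \sum_j `|a i j| ^+ 2 = d.
Proof.
rewrite !pair_bigA -card_prod => d_ge0 d_le.
under eq_bigr do rewrite exprM.
have y_ge0 (p : I * J) : 0 <= `|a p.1 p.2| ^+ 2 by rewrite exprn_ge0.
apply: (iff_trans (sum_exprS_eq y_ge0 d_ge0 d_le m)).
split=> -[[c ac] sum_eq]; split=> //.
  by exists (sqrtC c) => i j; rewrite -(ac (i, j)) sqrCK.
by exists (c ^+ 2) => -[i j]; rewrite ac.
Qed.

End NormSums.

Section Adjoint.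
Variable C : numClosedFieldType.

Lemma adjmxE m n (A : 'M[C]_(m, n)) i j : adjmx A i j = (A j i)^*.
Proof. by rewrite !mxE. Qed.

Lemma adjmxM m n p (A : 'M[C]_(m, n)) (B : 'M[C]_(n, p)) :
  adjmx (A *m B) = adjmx B *m adjmx A.
Proof. by rewrite /adjmx map_mxM trmx_mul. Qed.

Lemma adjmxK m n (A : 'M[C]_(m, n)) : adjmx (adjmx A) = A.
Proof. by apply/matrixP => i j; rewrite !adjmxE conjCK. Qed.

Lemma adjmxB m n (A B : 'M[C]_(m, n)) : adjmx (A - B) = adjmx A - adjmx B.
Proof. by apply/matrixP => i j; rewrite !mxE rmorphB. Qed.

Lemma adjmx0 m n : adjmx (0 : 'M[C]_(m, n)) = 0.
Proof. by apply/matrixP => i j; rewrite !mxE rmorph0. Qed.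

Lemma adjmx_trmxC m n (A : 'M[C]_(m, n)) : adjmx A = (A ^t Num.conj)%sesqui.
Proof. by rewrite /adjmx map_trmx. Qed.

Lemma adjmx_diag n (d : 'rV[C]_n) : adjmx (diag_mx d) = diag_mx (map_mx Num.conj d).
Proof. by apply/matrixP => i j; rewrite adjmxE !mxE eq_sym rmorphMn; case: eqP => // ->. Qed.

Lemma adjmx_gram m n (A : 'M[C]_(m, n)) : adjmx (adjmx A *m A) = adjmx A *m A.
Proof. by rewrite adjmxM adjmxK. Qed.

Lemma mxrank_adjmx m n (A : 'M[C]_(m, n)) : \rank (adjmx A) = \rank A.
Proof. by rewrite mxrank_tr mxrank_map. Qed.

Lemma mxrank_orthmx n (A : 'M[C]_n) : \rank (orthmx A) = (n - \rank A)%N.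
Proof. by rewrite mxrank_ker mxrank_adjmx. Qed.

Lemma mxtrace_mul_adjmx m n (A : 'M[C]_(m, n)) :
  \tr (A *m adjmx A) = \sum_i \sum_j `|A i j| ^+ 2.
Proof. by apply: eq_bigr => i _; rewrite mxE; apply: eq_bigr => j _; rewrite adjmxE normCK. Qed.

Lemma mxtrace_mul_adjmx_ge0 m n (A : 'M[C]_(m, n)) : 0 <= \tr (A *m adjmx A).
Proof. by rewrite mxtrace_mul_adjmx; do 2!apply: sumr_ge0 => ? _; rewrite exprn_ge0. Qed.

Lemma mxtrace_mul_adjmx_eq0 m n (A : 'M[C]_(m, n)) : \tr (A *m adjmx A) = 0 -> A = 0.
Proof.
have term_ge0 i j : 0 <= `|A i j| ^+ 2 by rewrite exprn_ge0.
rewrite mxtrace_mul_adjmx => A0; apply/matrixP => i j; move: A0.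
move=> /(psumr_eq0P (fun i _ => sumr_ge0 _ (fun j _ => term_ge0 i j)))/(_ i isT).
move=> /(psumr_eq0P (fun j _ => term_ge0 i j))/(_ j isT)/eqP.
by rewrite mxE expf_eq0 /= normr_eq0 => /eqP.
Qed.

Lemma mul_adjmx_eq0 m n (A : 'M[C]_(m, n)) : A *m adjmx A = 0 -> A = 0.
Proof. by move=> A0; apply: mxtrace_mul_adjmx_eq0; rewrite A0 mxtrace0. Qed.

Lemma adjmx_mul_eq0 m n (A : 'M[C]_(m, n)) : adjmx A *m A = 0 -> A = 0.
Proof. by move=> A0; apply: mxtrace_mul_adjmx_eq0; rewrite mxtrace_mulC A0 mxtrace0. Qed.

End Adjoint.

Lemma mxtrace_pid (F : fieldType) n r : (r <= n)%N -> \tr (pid_mx r : 'M[F]_n) = r%:R.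
Proof.
move=> r_le_n.
have -> : (pid_mx r : 'M[F]_n) = (pid_mx r : 'M[F]_(n, r)) *m (pid_mx r : 'M[F]_(r, n)).
  by rewrite mul_pid_mx !minnn.
by rewrite mxtrace_mulC mul_pid_mx !minnn (minn_idPr r_le_n) pid_mx_1 mxtrace1.
Qed.

Lemma mxtrace_idem (F : fieldType) n (A : 'M[F]_n) : A *m A = A -> \tr A = (\rank A)%:R.
Proof.
move=> A_idem; have := mulmx_ebase A; have := rank_leq_col A.
move: (col_ebase A) (row_ebase A) (col_ebase_unit A) (row_ebase_unit A).
move: (\rank A : nat) => r L U L_unit U_unit r_le_n A_ebase.
(* With [A = L P U], idempotence reads [P (U L) P = P], so [tr A = tr P = r]. *)
pose P : 'M[F]_n := pid_mx r; rewrite -/P in A_ebase.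
have unconj B : invmx L *m (L *m B *m U) *m invmx U = B.
  by rewrite -(mulmxA L) mulKmx // mulmxK.
have P_idem : P *m P = P by rewrite mul_pid_mx !minnn (minn_idPr r_le_n).
have PULP : P *m (U *m L) *m P = P.
  rewrite -[RHS]unconj A_ebase -A_idem -A_ebase -[LHS]unconj.
  by congr (_ *m _ *m _); rewrite !mulmxA.
rewrite -A_ebase mxtrace_mulC mulmxA -P_idem mulmxA mxtrace_mulC !mulmxA.
by rewrite -(mulmxA P) PULP mxtrace_pid.
Qed.

Section MoorePenrose.
Variable C : numClosedFieldType.

Lemma MP_inverse_uniq n (A X Y : 'M[C]_n) :
  is_MP_inverse A X -> is_MP_inverse A Y -> X = Y.
Proof.
case=> [AXA XAX AX_adj XA_adj] [AYA YAY AY_adj YA_adj].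
have AXY : A *m X = A *m Y.
  have -> : A *m X = A *m Y *m (A *m X) by rewrite !mulmxA AYA.
  by rewrite -{1}AY_adj -{1}AX_adj -adjmxM !mulmxA AXA AY_adj.
have XAY : X *m A = Y *m A.
  have -> : X *m A = X *m A *m (Y *m A) by rewrite -!mulmxA [A *m (Y *m A)]mulmxA AYA.
  by rewrite -{1}XA_adj -{1}YA_adj -adjmxM -!mulmxA [A *m (X *m A)]mulmxA AXA YA_adj.
by rewrite -XAX XAY -mulmxA AXY mulmxA YAY.
Qed.

Lemma MP_inverse_adj n (A X : 'M[C]_n) : adjmx A = A -> is_MP_inverse A X -> adjmx X = X.
Proof.
move=> A_adj X_MP; have [AXA XAX AX_adj XA_adj] := X_MP.
apply: (MP_inverse_uniq _ X_MP); split.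
- by rewrite -{1 2}A_adj -!adjmxM mulmxA AXA A_adj.
- by rewrite -A_adj -!adjmxM mulmxA XAX.
- by rewrite adjmxM adjmxK A_adj -XA_adj adjmxM A_adj.
- by rewrite adjmxM adjmxK A_adj -AX_adj adjmxM A_adj.
Qed.

Lemma MP_inverse_diag n (d : 'rV[C]_n) :
  is_MP_inverse (diag_mx d) (diag_mx (map_mx GRing.inv d)).
Proof.
rewrite /is_MP_inverse !mulmx_diag !adjmx_diag.
split; congr diag_mx; apply/rowP => j; rewrite !mxE;
  have [->|x_neq0] := eqVneq (d 0 j) 0; rewrite ?(invr0, mulr0, mul0r, rmorph0) //.
- by rewrite divfK.
- by rewrite mulVf // mul1r.
- by rewrite mulfV // rmorph1.
- by rewrite mulVf // rmorph1.
Qed.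

Lemma MP_inverse_unitary_conj n (U A X : 'M[C]_n) :
  U *m adjmx U = 1%:M -> is_MP_inverse A X ->
  is_MP_inverse (adjmx U *m A *m U) (adjmx U *m X *m U).
Proof.
move=> UU [AXA XAX AX_adj XA_adj].
have conjM (B D : 'M[C]_n) :
    adjmx U *m B *m U *m (adjmx U *m D *m U) = adjmx U *m (B *m D) *m U.
  by rewrite !mulmxA -(mulmxA _ U) UU mulmx1.
have conj_adj (B : 'M[C]_n) : adjmx (adjmx U *m B *m U) = adjmx U *m adjmx B *m U.
  by rewrite !adjmxM adjmxK mulmxA.
by split; rewrite !conjM ?conj_adj ?AXA ?XAX ?AX_adj ?XA_adj.
Qed.

Lemma MP_inverse_exists n (A : 'M[C]_n) : adjmx A = A -> exists X, is_MP_inverse A X.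
Proof.
move=> A_adj; have /orthomx_spectralP A_spec : A \is normalmx.
  by apply/normalmxP; rewrite -adjmx_trmxC A_adj.
have U_unitary := spectral_unitarymx A.
rewrite invmx_unitary // -adjmx_trmxC in A_spec.
exists (adjmx (spectralmx A) *m diag_mx (map_mx GRing.inv (spectral_diag A)) *m spectralmx A).
rewrite [X in is_MP_inverse X _]A_spec; apply: MP_inverse_unitary_conj (MP_inverse_diag _).
by rewrite adjmx_trmxC; apply/unitarymxP.
Qed.

End MoorePenrose.

Section GramMoorePenrose.
Variables (C : numClosedFieldType) (m n : nat) (A : 'M[C]_(m, n)) (X : 'M[C]_n).
Hypothesis X_MP : is_MP_inverse (adjmx A *m A) X.

Lemma MP_gram_mulr : A *m X *m (adjmx A *m A) = A.
Proof.
have [SXS _ _ _] := X_MP; set S := adjmx A *m A in SXS *.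
have : A *m (1%:M - X *m S) = 0.
  apply: adjmx_mul_eq0; rewrite adjmxM -mulmxA (mulmxA (adjmx A)) -/S.
  by rewrite mulmxBr mulmx1 (mulmxA S X S) SXS subrr mulmx0.
by move/eqP; rewrite mulmxBr mulmx1 mulmxA subr_eq0 eq_sym => /eqP.
Qed.

Lemma MP_gram_proj_adj : adjmx (A *m X *m adjmx A) = A *m X *m adjmx A.
Proof. by rewrite !adjmxM adjmxK (MP_inverse_adj (adjmx_gram A) X_MP) mulmxA. Qed.

Lemma MP_gram_proj_mulr : A *m X *m adjmx A *m A = A.
Proof. by rewrite -mulmxA MP_gram_mulr. Qed.

End GramMoorePenrose.

Section ProjectionDecomposition.
Variables (C : numClosedFieldType) (n : nat) (G H : 'M[C]_n).
Hypotheses (H_adj : adjmx H = H) (GH : G *m H = H) (HG : H *m G = G).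

Lemma mul_adjmx_sub_proj : (G - H) *m adjmx (G - H) = G *m adjmx G - H.
Proof.
have H_adjG : H *m adjmx G = H by rewrite -[H in H *m _]H_adj -adjmxM GH H_adj.
have HH : H *m H = H by rewrite -{2}GH mulmxA HG GH.
by rewrite adjmxB H_adj mulmxBl !mulmxBr GH H_adjG HH subrr subr0.
Qed.

Lemma mxtrace_proj : \tr H = \tr G.
Proof. by rewrite -[in LHS]GH mxtrace_mulC HG. Qed.

Lemma mxtrace_proj_le : \tr H <= \tr (G *m adjmx G).
Proof. by rewrite -subr_ge0 -raddfB /= -mul_adjmx_sub_proj mxtrace_mul_adjmx_ge0. Qed.

Lemma mxtrace_proj_eq : \tr (G *m adjmx G) = \tr H <-> G = H.
Proof.
split=> [tr_eq | GeH]; apply/eqP; rewrite -subr_eq0; last first.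
  by rewrite -raddfB /= -mul_adjmx_sub_proj GeH subrr mul0mx mxtrace0.
by apply/eqP/mxtrace_mul_adjmx_eq0; rewrite mul_adjmx_sub_proj raddfB /= tr_eq subrr.
Qed.

Lemma adjmx_proj_eq : adjmx G = G <-> G = H.
Proof.
split=> [G_adj | ->] //; have := congr1 (@adjmx _ _ _) HG.
by rewrite adjmxM H_adj G_adj GH => ->.
Qed.

End ProjectionDecomposition.

Section ObliqueDualFrame.
Variables (C : numClosedFieldType) (n N : nat).
Variables (W V : 'M[C]_n) (w v : 'I_N -> 'rV[C]_n).
Hypothesis WV_cap : (W :&: orthmx V = 0)%MS.
Hypothesis WV_full : (W + orthmx V == 1%:M)%MS.
Hypothesis w_frame : is_frame W w.
Hypothesis v_dual : is_oblique_dual W V w v.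

Local Notation Phi := (\matrix_(i < N) w i).
Local Notation Psi := (\matrix_(i < N) v i).
Local Notation G := (Phi *m adjmx Psi).

Lemma mul_adj_synthE m (F : 'M[C]_(m, n)) (u : 'I_N -> 'rV[C]_n) i j :
  (F *m adjmx (\matrix_k u k)) i j = ip (row i F) (u j).
Proof. by rewrite !mxE; apply: eq_bigr => k _; rewrite adjmxE !mxE. Qed.

Lemma cross_gramE i j : G i j = ip (w i) (v j).
Proof. by rewrite mul_adj_synthE rowK. Qed.

Lemma frame_opE : frame_op w = adjmx Phi *m Phi.
Proof.
apply/matrixP => a b; rewrite summxE !mxE; apply: eq_bigr => i _.
by rewrite [in LHS]mxE big_ord1 !adjmxE !mxE.
Qed.

Lemma oblique_projE : oblique_proj W V = adjmx Psi *m Phi.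
Proof.
apply/row_matrixP => i; rewrite !rowE (proj2 v_dual) mulmxA.
apply/rowP => k; rewrite summxE !mxE; apply: eq_bigr => j _.
by rewrite mul_adj_synthE row_id !mxE.
Qed.

Lemma synth_sub_frame : (Phi <= W)%MS.
Proof. by case/andP: w_frame. Qed.

Lemma frame_sub_synth : (W <= Phi)%MS.
Proof. by case/andP: w_frame. Qed.

Lemma mxtrace_cross_gram : \tr G = (\rank W)%:R.
Proof.
rewrite mxtrace_mulC -oblique_projE mxtrace_idem; last exact: proj_mx_proj.
congr _%:R; apply/eqmx_rank/andP; split.
  by rewrite -[oblique_proj W V]mul1mx proj_mx_sub.
by rewrite -{1}(proj_mx_id WV_cap (submx_refl W)) submxMl.
Qed.

Lemma mxrank_dual_space : \rank V = \rank W.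
Proof.
have := mxrank_sum_cap W (orthmx V).
rewrite WV_cap mxrank0 (eqmx_rank WV_full) mxrank1 mxrank_orthmx addn0.
by have := rank_leq_col V; lia.
Qed.

Lemma dual_capmx_orth : (V :&: orthmx W = 0)%MS.
Proof.
set u := (V :&: orthmx W)%MS; apply: mul_adjmx_eq0.
have W_u : W *m adjmx u = 0.
  have u_W : u *m adjmx W = 0 by apply/sub_kermxP; apply: capmxSr.
  by rewrite -[W]adjmxK -adjmxM u_W adjmx0.
have orthV_u : orthmx V *m adjmx u = 0.
  have /submxP[z ->] : (u <= V)%MS by apply: capmxSl.
  by rewrite adjmxM mulmxA mulmx_ker mul0mx.
have /sub_addsmxP[y u_sum] : (u <= W + orthmx V)%MS.
  by apply: submx_trans (submx1 u) _; case/andP: WV_full.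
by rewrite {1}u_sum mulmxDl -(mulmxA y.1) -(mulmxA y.2) W_u orthV_u !mulmx0 addr0.
Qed.

Lemma dual_addsmx_orth : (1%:M <= V + orthmx W)%MS.
Proof.
rewrite sub1mx /row_full mxrank_disjoint_sum ?dual_capmx_orth //.
by rewrite mxrank_orthmx mxrank_dual_space subnKC ?rank_leq_col.
Qed.

Lemma oblique_proj_dual_adj : oblique_proj V W *m adjmx Phi = adjmx Phi.
Proof.
have P_W : oblique_proj V W *m adjmx W = adjmx W.
  have : (1%:M - oblique_proj V W <= orthmx W)%MS.
    by have := proj_mx_compl_sub dual_addsmx_orth; rewrite mul1mx.
  move/sub_kermxP/eqP; rewrite mulmxBl mul1mx subr_eq0 eq_sym.
  by move/eqP.
have /submxP[y ->] := synth_sub_frame.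
by rewrite adjmxM mulmxA P_W.
Qed.

Section CanonicalDual.
Variable X : 'M[C]_n.
Hypothesis X_MP : is_MP_inverse (adjmx Phi *m Phi) X.
(* [H i j = <w_i, w_j X>] is the cross Gram matrix of [w] and its canonical
   dual [w_j X]: the orthogonal projection onto the column space of [Phi]. *)
Local Notation H := (Phi *m X *m adjmx Phi).

Lemma cross_gram_mul_proj : G *m H = H.
Proof.
by rewrite !mulmxA -(mulmxA Phi) -oblique_projE proj_mx_id ?synth_sub_frame.
Qed.

Lemma proj_mul_cross_gram : H *m G = G.
Proof. by rewrite mulmxA MP_gram_proj_mulr. Qed.

Lemma dual_frame_of_cross_gram : G = H -> forall j, v j = w j *m X *m oblique_proj V W.
Proof.
move=> GH j; set D := Psi - Phi *m X *m oblique_proj V W.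
have D_V : (D <= V)%MS.
  by rewrite addmx_sub ?eqmx_opp ?proj_mx_sub //; case/andP: (proj1 v_dual).
have D_orthW : (D <= orthmx W)%MS.
  apply/sub_kermxP; have /submxP[y ->] := frame_sub_synth.
  rewrite adjmxM mulmxA /D mulmxBl -(mulmxA _ (oblique_proj V W)) oblique_proj_dual_adj.
  by rewrite -[Psi *m _]adjmxK adjmxM adjmxK GH MP_gram_proj_adj // subrr mul0mx.
have : D = 0 by apply/eqP; rewrite -submx0 -dual_capmx_orth sub_capmx D_V D_orthW.
by move/eqP; rewrite subr_eq0 => /eqP /(congr1 (row j)); rewrite !row_mul !rowK.
Qed.

End CanonicalDual.

Lemma adjmx_cross_gram_canonical X : is_MP_inverse (adjmx Phi *m Phi) X ->
  (forall j, v j = w j *m X *m oblique_proj V W) -> adjmx G = G.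
Proof.
move=> X_MP v_canonical.
have -> : Psi = Phi *m X *m oblique_proj V W.
  by apply/row_matrixP => j; rewrite rowK v_canonical !row_mul rowK.
have Phi_P : Phi *m adjmx (oblique_proj V W) = Phi.
  by rewrite -[Phi in RHS]adjmxK -oblique_proj_dual_adj adjmxM adjmxK.
have -> : Phi *m adjmx (Phi *m X *m oblique_proj V W) = Phi *m X *m adjmx Phi.
  rewrite (adjmxM (Phi *m X)) (adjmxM Phi X) (MP_inverse_adj (adjmx_gram Phi) X_MP).
  by rewrite mulmxA Phi_P mulmxA.
exact: MP_gram_proj_adj.
Qed.

Lemma sum_diag_cross_gram : \sum_i ip (w i) (v i) = (\rank W)%:R.
Proof. by rewrite -mxtrace_cross_gram; apply: eq_bigr => i _; rewrite cross_gramE. Qed.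

Lemma sum_sqr_cross_gramE :
  \sum_i \sum_j `|ip (w i) (v j)| ^+ 2 = \tr (G *m adjmx G).
Proof. by rewrite mxtrace_mul_adjmx; do 2!(apply: eq_bigr => ? _); rewrite cross_gramE. Qed.

Lemma rank_le_sum_sqr_cross_gram : (\rank W)%:R <= \sum_i \sum_j `|ip (w i) (v j)| ^+ 2.
Proof.
have [X X_MP] := MP_inverse_exists (adjmx_gram Phi).
have H_adj := MP_gram_proj_adj X_MP.
have GH := cross_gram_mul_proj X; have HG := proj_mul_cross_gram X_MP.
rewrite sum_sqr_cross_gramE -mxtrace_cross_gram -(mxtrace_proj GH HG).
exact: mxtrace_proj_le H_adj GH HG.
Qed.

Lemma sum_sqr_cross_gram_eq_rank :
  \sum_i \sum_j `|ip (w i) (v j)| ^+ 2 = (\rank W)%:R <->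
  exists X, is_MP_inverse (frame_op w) X /\ forall j, v j = w j *m X *m oblique_proj V W.
Proof.
have [X0 X0_MP] := MP_inverse_exists (adjmx_gram Phi).
have H_adj := MP_gram_proj_adj X0_MP.
have GH := cross_gram_mul_proj X0; have HG := proj_mul_cross_gram X0_MP.
rewrite sum_sqr_cross_gramE -mxtrace_cross_gram -(mxtrace_proj GH HG) frame_opE.
apply: (iff_trans (mxtrace_proj_eq H_adj GH HG)).
split=> [G_H | [X [X_MP v_canonical]]].
  by exists X0; split=> //; apply: dual_frame_of_cross_gram.
by apply/(adjmx_proj_eq H_adj GH HG); apply: adjmx_cross_gram_canonical X_MP v_canonical.
Qed.

End ObliqueDualFrame.

Theorem corollary3p4 (C : numClosedFieldType) (n N k : nat)
  (W V : 'M[C]_n) (w v : 'I_N -> 'rV[C]_n) :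
  (W :&: orthmx V = 0)%MS ->
  (W + orthmx V == 1%:M)%MS ->
  is_frame W w ->
  is_oblique_dual W V w v ->
  (1 <= k)%N ->
  let p := (2 * k)%N in
  let dW := \rank W in
  let S := frame_op w in
  let s1 := \sum_(i < N) `|ip (w i) (v i)| ^+ p in
  let s2 := \sum_(i < N) \sum_(j < N) `|ip (w i) (v j)| ^+ p in
  let b1 := (N%:R : C) ^ (1 - p%:Z) * dW%:R ^+ p in
  let b2 := (N%:R : C) ^ (2 - p%:Z) * dW%:R ^+ k in
  [/\ b1 <= s1, b2 <= s2,
      (1 < k)%N -> (s1 = b1 <-> forall i, ip (w i) (v i) = dW%:R / N%:R) &
      (1 < k)%N ->
        (s2 = b2 <->
          (exists c : C, forall i j, `|ip (w i) (v j)| = c) /\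
          (exists X : 'M[C]_n, is_MP_inverse S X /\
             forall j, v j = w j *m X *m oblique_proj V W))].
Proof.
move=> WV_cap WV_full w_frame v_dual; case: k => [//|k] _; cbv zeta.
have diag_sum := sum_diag_cross_gram WV_cap v_dual.
have sqr_sum_ge := rank_le_sum_sqr_cross_gram WV_cap w_frame v_dual.
have sqr_sum_eq := sum_sqr_cross_gram_eq_rank WV_cap WV_full w_frame v_dual.
have rank_ge0 : 0 <= (\rank W)%:R :> C by rewrite ler0n.
have N2 m : N%:R ^- (2 * m) = (#|'I_N| * #|'I_N|)%:R ^- m :> C.
  by rewrite card_ord natrM -expr2 exprM.
have p_eq : (2 * k.+1 = (2 * k).+2)%N by lia.
have -> : (1 - (2 * k.+1)%N%:Z = - ((2 * k).+1)%:Z)%R by lia.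
have -> : (2 - (2 * k.+1)%N%:Z = - (2 * k)%:Z)%R by lia.
rewrite -!exprnN N2; split.
- by have := normC_sum_exprS_ge (2 * k).+1 diag_sum rank_ge0; rewrite card_ord p_eq.
- exact: double_sum_normC_exprS_ge.
- by move=> _; have := normC_sum_exprS_eq (2 * k) diag_sum rank_ge0; rewrite card_ord p_eq.
- case: k {p_eq} => [//|k] _.
  exact: iff_trans (double_sum_normC_exprS_eq k rank_ge0 sqr_sum_ge)
                   (and_iff_compat_l _ sqr_sum_eq).
Qed.
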